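(* Let $n>24$, $s>0$, $L>9$, and $m=Ln$ (assumed to be an integer). Let $v=(v_1,\dots,v_n)$ with $v_i\ge0$ and $\sum_i v_i=1$. Then $$\mathsf P\left\{\mathrm{AST}(v,x)\le L\,n\,\|v\|\,\|p\|\sqrt{1+\frac{3+6s}{\sqrt L}+\frac{5s^2}{L}}+1\right\}\ \ge\ 1-\frac{10}{9}e^{-s^2/4}.$$
   Context: Standing setup: $U$ is a finite set (the key space) with a probability measure $q$; $T=\{1,\dots,n\}$; $h:U\to T$ is an arbitrary function. $p_i=\sum_{u\in h^{-1}(i)}q(u)$ and $\|p\|^2=\sum_{i=1}^n p_i^2$. $U^m$ carries the product measure $q^m$, and $\mathsf P$ denotes probability under $q^m$ for $x=(x_1,\dots,x_m)\in U^m$. $k_i(x)=|\{j: h(x_j)=i\}|$. $\|\cdot\|$ is the euclidean norm. The vector $v$ is a user's access pattern ($v_i$ = fraction of the user's searches directed to slot $i$). $\mathrm{AST}(v,x)$ denotes the average search time of such a user in a hash table with chaining after the keys $x$ have been inserted; in this model it satisfies $\mathrm{AST}(v,x)\le\sum_{i=1}^n v_i\,k_i(x)$ (search time in slot $i$ identified with chain length, counted with multiplicity). *)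

From HB Require Import structures.
From mathcomp Require Import all_boot all_order all_algebra.
From mathcomp Require Import all_classical all_reals.
From mathcomp Require Import all_analysis.
Set Implicit Arguments. Unset Strict Implicit. Unset Printing Implicit Defensive.
Import Order.TTheory GRing.Theory Num.Theory.
Local Open Scope ring_scope.

Section Hashing.
Variables (R : realType) (U : finType) (n m : nat).

Definition slot_prob (q : U -> R) (h : U -> 'I_n) (i : 'I_n) : R :=
  \sum_(u | h u == i) q u.

Definition chain_len (h : U -> 'I_n) (x : {ffun 'I_m -> U}) (i : 'I_n) : nat :=
  #|[set j : 'I_m | h (x j) == i]|.

Definition enorm (w : 'I_n -> R) : R := Num.sqrt (\sum_i w i ^+ 2).

Definition prodP (q : U -> R) (E : {ffun 'I_m -> U} -> bool) : R :=
  \sum_(x : {ffun 'I_m -> U} | E x) \prod_(j < m) q (x j).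

End Hashing.

(* AST is bounded by S(x) = sum_j v_(h(x_j)), a sum of m independent copies of a
   variable with values in [0, ||v||] and mean mu = sum_i p_i v_i <= ||p|| ||v||.
   A Chernoff bound, with the moment generating function estimated through
   exp y <= y + exp (2 y^2), gives P(S > m mu + t) <= exp(-t^2 / (8 m ||v||^2)).
   Since sqrt(1 + ...) >= 1 + 2 s / sqrt L and n ||p||^2 >= 1, the room t between
   the threshold and m mu is at least 2 s ||v|| sqrt m, so the exponent is at least
   s^2/2. *)
From HB Require Import structures.
From mathcomp Require Import all_boot all_order all_algebra.
From mathcomp Require Import all_classical all_reals.
From mathcomp Require Import all_analysis.
From mathcomp Require Import ring lra.
Import Order.TTheory GRing.Theory Num.Theory.
Local Open Scope ring_scope.

Section RealInequalities.
Context {R : realType}.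

Lemma expR_le_add_expR_sqr (x : R) : expR x <= x + expR (2 * x ^+ 2).
Proof.
have [x_ge|x_lt] := lerP (1 / 2) x.
  have : x <= 2 * x ^+ 2 by nra.
  by rewrite -ler_expR => /le_trans; apply; lra.
(* For x < 1/2: expR x = 1 / expR (-x) <= 1 / (1 - x) <= 1 + x + 2 x^2. *)
have x1_gt0 : 0 < 1 - x by lra.
have le_inv : expR x <= (1 - x)^-1.
  rewrite -[expR x]invrK -expRN lef_pV2 ?posrE ?expR_gt0 //.
  by have := expR_ge1Dx (- x); lra.
have inv_le : (1 - x)^-1 <= 1 + x + 2 * x ^+ 2.
  by rewrite -[(1 - x)^-1]div1r ler_pdivrMr //; nra.
by have := expR_ge1Dx (2 * x ^+ 2); lra.
Qed.

Lemma sqr_sum_mul_le {I : finType} (F G : I -> R) :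
  (\sum_i F i * G i) ^+ 2 <= (\sum_i F i ^+ 2) * (\sum_i G i ^+ 2).
Proof.
have lagrange : 2 * ((\sum_i F i ^+ 2) * (\sum_i G i ^+ 2) - (\sum_i F i * G i) ^+ 2)
    = \sum_i \sum_j (F i * G j - F j * G i) ^+ 2.
  have AB : (\sum_i F i ^+ 2) * (\sum_i G i ^+ 2) = \sum_i \sum_j F i ^+ 2 * G j ^+ 2.
    by rewrite big_distrlr.
  have BA : (\sum_i F i ^+ 2) * (\sum_i G i ^+ 2) = \sum_i \sum_j F j ^+ 2 * G i ^+ 2.
    by rewrite mulrC big_distrlr; apply: eq_bigr => i _; apply: eq_bigr => j _; rewrite mulrC.
  have C2 : (\sum_i F i * G i) ^+ 2 = \sum_i \sum_j F i * G i * (F j * G j).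
    by rewrite expr2 big_distrlr.
  transitivity (\sum_i \sum_j F i ^+ 2 * G j ^+ 2 + \sum_i \sum_j F j ^+ 2 * G i ^+ 2
      - 2 * \sum_i \sum_j F i * G i * (F j * G j)).
    by rewrite -AB -BA -C2; ring.
  rewrite -big_split /= mulr_sumr -sumrB; apply: eq_bigr => i _.
  by rewrite -big_split /= mulr_sumr -sumrB; apply: eq_bigr => j _; ring.
have : 0 <= \sum_i \sum_j (F i * G j - F j * G i) ^+ 2.
  by apply: sumr_ge0 => i _; apply: sumr_ge0 => j _; exact: sqr_ge0.
by rewrite -lagrange; lra.
Qed.

Lemma sqr_sum_le_card {I : finType} (F : I -> R) :
  (\sum_i F i) ^+ 2 <= #|I|%:R * \sum_i F i ^+ 2.
Proof.
have -> : \sum_i F i = \sum_i 1 * F i by apply: eq_bigr => i _; rewrite mul1r.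
have -> : #|I|%:R = \sum_(i : I) 1 ^+ 2 :> R.
  by rewrite -sumr_const; apply: eq_bigr => i _; rewrite expr1n.
exact: sqr_sum_mul_le.
Qed.

Lemma le_sqrt_overhead (L s : R) : 0 < L -> 0 < s ->
  1 + 2 * s / Num.sqrt L <= Num.sqrt (1 + (3 + 6 * s) / Num.sqrt L + 5 * s ^+ 2 / L).
Proof.
move=> L_gt0 s_gt0; set l := Num.sqrt L; set y := s / l.
have l_gt0 : 0 < l by rewrite sqrtr_gt0.
have y_gt0 : 0 < y by rewrite divr_gt0.
have -> : (3 + 6 * s) / l = 3 / l + 6 * y by rewrite /y; field; rewrite gt_eqF.
have -> : 5 * s ^+ 2 / L = 5 * y ^+ 2.
  by rewrite -[L]sqr_sqrtr ?ltW // -/l /y; field; rewrite gt_eqF.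
have -> : 1 + 2 * s / l = Num.sqrt ((1 + 2 * y) ^+ 2).
  by rewrite sqrtr_sqr ger0_norm; [rewrite /y mulrA | lra].
have three_gt0 : 0 < 3 / l by rewrite divr_gt0.
by rewrite ler_sqrt; nra.
Qed.

End RealInequalities.

Section ProductMeasure.
Context {R : realType} {U : finType} {q : U -> R}.
Hypothesis q_ge0 : forall u, 0 <= q u.

Lemma prodP_le {m : nat} {E F : {ffun 'I_m -> U} -> bool} :
  (forall x, E x -> F x) -> prodP q E <= prodP q F.
Proof.
move=> EF; rewrite /prodP [X in X <= _]big_mkcond [X in _ <= X]big_mkcond /=.
apply: ler_sum => x _; case: (boolP (E x)) => [/EF -> //|_].
by case: (F x) => //; apply: prodr_ge0.
Qed.

Lemma prodP_sum_gt_le (m : nat) (f : U -> R) (c lam : R) : 0 <= lam ->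
  prodP q (fun x : {ffun 'I_m -> U} => c < \sum_j f (x j))
    <= expR (- (lam * c)) * (\sum_u q u * expR (lam * f u)) ^+ m.
Proof.
move=> lam_ge0; rewrite /prodP.
have w_ge0 (x : {ffun 'I_m -> U}) : 0 <= \prod_j q (x j) by apply: prodr_ge0.
(* Markov's inequality for expR (lam * (S - c)), which is >= 1 on the event. *)
apply: (@le_trans _ _ (\sum_(x : {ffun 'I_m -> U})
    \prod_j q (x j) * expR (lam * (\sum_j f (x j) - c)))).
  rewrite [X in _ <= X](bigID (fun x : {ffun 'I_m -> U} => c < \sum_j f (x j))) /=.
  rewrite -[X in X <= _]addr0; apply: lerD.
    apply: ler_sum => x /ltW S_ge; rewrite ler_peMr // -expR0 ler_expR.
    by rewrite mulr_ge0 // subr_ge0.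
  by apply: sumr_ge0 => x _; rewrite mulr_ge0 ?expR_ge0.
have -> : \sum_(x : {ffun 'I_m -> U}) \prod_j q (x j) * expR (lam * (\sum_j f (x j) - c))
    = expR (- (lam * c)) * \sum_(x : {ffun 'I_m -> U}) \prod_j (q (x j) * expR (lam * f (x j))).
  rewrite mulr_sumr; apply: eq_bigr => x _.
  by rewrite big_split /= mulrBr addrC expRD mulr_sumr expR_sum; ring.
by rewrite -(bigA_distr_bigA (fun _ u => q u * expR (lam * f u))) /= prodr_const card_ord.
Qed.

Hypothesis q_sum1 : \sum_u q u = 1.

Lemma prodPN (m : nat) (E : {ffun 'I_m -> U} -> bool) :
  prodP q (fun x => ~~ E x) = 1 - prodP q E.
Proof.
have total : \sum_(x : {ffun 'I_m -> U}) \prod_j q (x j) = 1.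
  by rewrite -(bigA_distr_bigA (fun _ u => q u)) /= prodr_const q_sum1 expr1n.
by move: total; rewrite /prodP (bigID E) /=; lra.
Qed.

(* Center at mu and apply expR y <= y + expR (2 y^2) termwise: the linear terms
   average to 0. *)
Lemma mgf_le (f : U -> R) (mu b lam : R) :
  \sum_u q u * f u = mu -> (forall u, (f u - mu) ^+ 2 <= b ^+ 2) ->
  \sum_u q u * expR (lam * f u) <= expR (lam * mu + 2 * lam ^+ 2 * b ^+ 2).
Proof.
move=> mean dev_le.
have -> : \sum_u q u * expR (lam * f u)
    = expR (lam * mu) * \sum_u q u * expR (lam * (f u - mu)).
  rewrite mulr_sumr; apply: eq_bigr => u _.
  by rewrite mulrBr expRB; field; rewrite gt_eqF // expR_gt0.
rewrite expRD ler_pM2l ?expR_gt0 //.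
apply: (@le_trans _ _ (\sum_u q u * (lam * (f u - mu) + expR (2 * lam ^+ 2 * b ^+ 2)))).
  apply: ler_sum => u _; apply: ler_wpM2l => //.
  apply: (le_trans (expR_le_add_expR_sqr _)); rewrite lerD2l ler_expR.
  by rewrite exprMn -mulrA ler_pM2l // ler_wpM2l ?sqr_ge0.
have -> : \sum_u q u * (lam * (f u - mu) + expR (2 * lam ^+ 2 * b ^+ 2))
    = lam * (\sum_u q u * f u - mu * \sum_u q u) + expR (2 * lam ^+ 2 * b ^+ 2) * \sum_u q u.
  rewrite [mu * _]mulr_sumr -sumrB [lam * _]mulr_sumr [expR _ * _]mulr_sumr -big_split /=.
  by apply: eq_bigr => u _; ring.
by rewrite mean q_sum1; lra.
Qed.

Lemma prodP_sum_deviation_le {m : nat} {f : U -> R} {mu b t : R} :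
  (0 < m)%N -> 0 < b -> 0 <= t ->
  \sum_u q u * f u = mu -> (forall u, (f u - mu) ^+ 2 <= b ^+ 2) ->
  prodP q (fun x : {ffun 'I_m -> U} => m%:R * mu + t < \sum_j f (x j))
    <= expR (- (t ^+ 2 / (8 * m%:R * b ^+ 2))).
Proof.
move=> m_gt0 b_gt0 t_ge0 mean dev_le.
set lam := t / (4 * m%:R * b ^+ 2).
have lam_ge0 : 0 <= lam by rewrite divr_ge0 // mulr_ge0 ?sqr_ge0.
apply: (le_trans (@prodP_sum_gt_le m f _ lam lam_ge0)).
have mgf_ge0 : 0 <= \sum_u q u * expR (lam * f u).
  by apply: sumr_ge0 => u _; rewrite mulr_ge0 ?expR_ge0.
have := lerXn2r m mgf_ge0 (expR_ge0 _) (@mgf_le f mu b lam mean dev_le).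
rewrite -expRM_natl => /(ler_wpM2l (expR_ge0 (- (lam * (m%:R * mu + t))))) /le_trans.
apply; rewrite -expRD.
have -> : - (lam * (m%:R * mu + t)) + m%:R * (lam * mu + 2 * lam ^+ 2 * b ^+ 2)
    = - (t ^+ 2 / (8 * m%:R * b ^+ 2)).
  by rewrite /lam; field; rewrite gt_eqF // pnatr_eq0 -lt0n m_gt0.
by [].
Qed.

End ProductMeasure.

Lemma overhead_deviation {R : realType} {L s N a b mu c : R} :
  0 < L -> 0 < s -> 0 < b -> 0 <= a -> 1 <= N * a ^+ 2 -> mu <= a * b ->
  L * N * b * a * Num.sqrt (1 + (3 + 6 * s) / Num.sqrt L + 5 * s ^+ 2 / L) <= c ->
  0 <= c - L * N * mu /\ 2 * (L * N) * b ^+ 2 * s ^+ 2 <= (c - L * N * mu) ^+ 2.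
Proof.
set A := Num.sqrt _ => L_gt0 s_gt0 b_gt0 a_ge0 Na_ge1 mu_le A_le.
have l_gt0 : 0 < Num.sqrt L by rewrite sqrtr_gt0.
have A1_ge : 2 * s / Num.sqrt L <= A - 1.
  by have := le_sqrt_overhead L s L_gt0 s_gt0; rewrite -/A; lra.
have y_ge0 : 0 <= 2 * s / Num.sqrt L by rewrite divr_ge0 ?sqrtr_ge0 //; lra.
have LA_ge : 4 * s ^+ 2 <= L * (A - 1) ^+ 2.
  have -> : 4 * s ^+ 2 = L * (2 * s / Num.sqrt L) ^+ 2.
    by rewrite expr_div_n sqr_sqrtr ?ltW //; field; rewrite gt_eqF.
  apply: ler_wpM2l; first exact: ltW.
  by apply: lerXn2r; rewrite ?nnegrE //; lra.
have N_gt0 : 0 < N by nra.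
have LN_ge0 : 0 <= L * N by rewrite mulr_ge0 ?ltW.
have dev_ge : L * N * b * a * (A - 1) <= c - L * N * mu.
  have : L * N * mu <= L * N * (a * b) by rewrite ler_wpM2l.
  have -> : L * N * b * a * (A - 1) = L * N * b * a * A - L * N * (a * b) by ring.
  lra.
have base_ge0 : 0 <= L * N * b * a * (A - 1).
  by rewrite mulr_ge0 ?(mulr_ge0 (mulr_ge0 LN_ge0 (ltW b_gt0)) a_ge0) //; lra.
split; first exact: le_trans dev_ge.
apply: le_trans (lerXn2r 2 _ _ dev_ge); rewrite ?nnegrE //; last exact: le_trans dev_ge.
have -> : (L * N * b * a * (A - 1)) ^+ 2 = L * N * b ^+ 2 * (N * a ^+ 2) * (L * (A - 1) ^+ 2).
  by ring.
have LNb_ge0 : 0 <= L * N * b ^+ 2 by rewrite mulr_ge0 ?sqr_ge0.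
have : 4 * s ^+ 2 <= N * a ^+ 2 * (L * (A - 1) ^+ 2) by nra.
nra.
Qed.

Section EuclideanNorm.
Context {R : realType} {n : nat}.
Implicit Types w : 'I_n -> R.

Lemma enorm_ge0 w : 0 <= enorm w.
Proof. exact: sqrtr_ge0. Qed.

Lemma sqr_enorm w : enorm w ^+ 2 = \sum_i w i ^+ 2.
Proof. by rewrite sqr_sqrtr // sumr_ge0 // => i _; apply: sqr_ge0. Qed.

Lemma ler_enorm w i : w i <= enorm w.
Proof.
apply: le_trans (ler_norm _) _; rewrite -sqrtr_sqr ler_wsqrtr //.
by rewrite (bigD1 i) //= lerDl sumr_ge0 // => j _; apply: sqr_ge0.
Qed.

Lemma sum_mul_le_enorm w w' : \sum_i w i * w' i <= enorm w * enorm w'.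
Proof.
have := sqr_sum_mul_le w w'; rewrite -!sqr_enorm.
by have := mulr_ge0 (enorm_ge0 w) (enorm_ge0 w'); nra.
Qed.

Lemma sqr_sum_le_enorm w : (\sum_i w i) ^+ 2 <= n%:R * enorm w ^+ 2.
Proof. by rewrite sqr_enorm -[n in n%:R]card_ord sqr_sum_le_card. Qed.

End EuclideanNorm.

Lemma sum_fibers {R : realType} {A I : finType} (g : A -> I) (F : A -> I -> R) :
  \sum_i \sum_(a | g a == i) F a i = \sum_a F a (g a).
Proof.
rewrite (exchange_big_dep xpredT) //=; apply: eq_bigr => a _.
by rewrite (big_pred1 (g a)) // => i; rewrite /= eq_sym.
Qed.

Section Hashing.
Context {R : realType} {U : finType} {n : nat} (h : U -> 'I_n).

Lemma sum_slot_prob_mul (q : U -> R) (w : 'I_n -> R) :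
  \sum_i slot_prob q h i * w i = \sum_u q u * w (h u).
Proof.
rewrite -(sum_fibers h (fun u i => q u * w i)).
by apply: eq_bigr => i _; rewrite mulr_suml.
Qed.

Lemma sum_chain_len (m : nat) (v : 'I_n -> R) (x : {ffun 'I_m -> U}) :
  \sum_i v i * (chain_len h x i)%:R = \sum_j v (h (x j)).
Proof.
rewrite -(sum_fibers (fun j => h (x j)) (fun _ i => v i)); apply: eq_bigr => i _.
rewrite /chain_len -sum1_card natr_sum mulr_sumr.
by apply: eq_big => [j|j _]; rewrite ?inE ?mulr1.
Qed.

End Hashing.

Theorem corollary4 (R : realType) (U : finType) (q : U -> R)
  (n : nat) (h : U -> 'I_n) (s L : R) (m : nat) (v : 'I_n -> R)
  (AST : {ffun 'I_m -> U} -> R) :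
  (forall u, 0 <= q u) -> \sum_u q u = 1 ->
  (24 < n)%N -> 0 < s -> 9 < L -> m%:R = L * n%:R ->
  (forall i, 0 <= v i) -> \sum_i v i = 1 ->
  (forall x, AST x <= \sum_i v i * (chain_len h x i)%:R) ->
  prodP q (fun x => AST x <=
     L * n%:R * enorm v * enorm (slot_prob q h)
       * Num.sqrt (1 + (3 + 6 * s) / Num.sqrt L + 5 * s ^+ 2 / L) + 1)
  >= 1 - 10 / 9 * expR (- (s ^+ 2) / 4).
Proof.
move=> q_ge0 q_sum1 n_gt24 s_gt0 L_gt9 m_eq v_ge0 v_sum1 AST_le.
set b := enorm v; set a := enorm (slot_prob q h); set A := Num.sqrt _; set c := _ + 1.
set mu := \sum_u q u * v (h u).
have L_gt0 : 0 < L by lra.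
have m_gt0 : (0 < m)%N by rewrite -(ltr0n R) m_eq mulr_gt0 // ltr0n (ltn_trans _ n_gt24).
have a_ge1 : 1 <= n%:R * a ^+ 2.
  have := sqr_sum_le_enorm (slot_prob q h).
  by rewrite -/a /slot_prob (sum_fibers h (fun u _ => q u)) q_sum1 expr1n.
have b_gt0 : 0 < b.
  have := sqr_sum_le_enorm v; rewrite v_sum1 expr1n -/b => b_ge1.
  by rewrite lt_def enorm_ge0 andbT; apply/eqP => b0; move: b_ge1; rewrite b0 expr0n mulr0 ler10.
have mu_le : mu <= a * b by rewrite /mu -sum_slot_prob_mul sum_mul_le_enorm.
have mu_ge0 : 0 <= mu by rewrite sumr_ge0 // => u _; rewrite mulr_ge0.
have dev_le u : (v (h u) - mu) ^+ 2 <= b ^+ 2.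
  have mu_le_b : mu <= b.
    rewrite /mu -[b]mul1r -q_sum1 mulr_suml ler_sum // => u' _.
    by rewrite ler_wpM2l ?ler_enorm.
  by have := ler_enorm v (h u); have := v_ge0 (h u); rewrite -/b; nra.
have c_ge : L * n%:R * b * a * A <= c by rewrite lerDl.
have [dev_ge0 dev_sqr] := overhead_deviation L_gt0 s_gt0 b_gt0 (enorm_ge0 _) a_ge1 mu_le c_ge.
have mean : \sum_u q u * v (h u) = mu by [].
have tail := prodP_sum_deviation_le q_ge0 q_sum1 m_gt0 b_gt0 dev_ge0 mean dev_le.
have exp_le : expR (- ((c - L * n%:R * mu) ^+ 2 / (8 * m%:R * b ^+ 2))) <= expR (- s ^+ 2 / 4).
  rewrite ler_expR mulNr lerN2 ler_pdivlMr; last by rewrite !mulr_gt0 ?ltr0n ?exprn_gt0.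
  by rewrite m_eq [leLHS](_ : _ = 2 * (L * n%:R) * b ^+ 2 * s ^+ 2) //; field.
have := le_trans tail exp_le; rewrite m_eq addrC subrK => {}tail.
have S_le (x : {ffun 'I_m -> U}) : ~~ (c < \sum_j v (h (x j))) -> AST x <= c.
  by rewrite -leNgt => S_le; rewrite (le_trans (AST_le x)) // sum_chain_len.
apply: le_trans (prodP_le q_ge0 S_le); rewrite prodPN //.
by have := expR_ge0 (- s ^+ 2 / 4); lra.
Qed.
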